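(* Let $1\le d<n$ and $\underline j=j_1\cdots j_d\in I(d,n)$. Write $$\nu^b_{\mathfrak C_{\mathrm{right}}}(P_{\underline j}/P_{\underline i_{\min}})=(a_{1,n-d},\dots,a_{1,1},a_{2,n-d},\dots,a_{2,1},\dots,a_{d,n-d},\dots,a_{d,1}).$$ Then for each $k=1,\dots,d$ one has $a_{k,1}=\cdots=a_{k,j_k-k}=1$, and all other coordinates are $0$.
   Context: $\mathbb K$ is algebraically closed of characteristic $0$. $\mathrm{Gr}_{d,n}\subseteq\mathbb P(\Lambda^d\mathbb K^n)$ is the Grassmannian in its Plücker embedding; $e_{\underline i}=e_{i_1}\wedge\cdots\wedge e_{i_d}$ for $\underline i\in I(d,n)$ (the set of increasing $d$-subsets of $\{1,\dots,n\}$), $P_{\underline i}$ the dual basis (Plücker coordinates), $\underline i_{\min}=12\cdots d$, $r=d(n-d)$, and $f_k=E_{k+1,k}\in\mathfrak{sl}_n(\mathbb K)$. The chain $\mathfrak C_{\mathrm{right}}$ of Schubert varieties has birational sequence $(\alpha_{n-d},\dots,\alpha_1,\alpha_{n-d+1},\dots,\alpha_2,\dots,\alpha_{n-1},\dots,\alpha_d)=:(\alpha_{\ell_r},\dots,\alpha_{\ell_1})$ ($d$ blocks, the $k$-th block running from $\alpha_{n-d+k-1}$ down to $\alpha_k$). The map $m:\mathbb A^r\to\mathrm{Gr}_{d,n}$, $(t_r,\dots,t_1)\mapsto\exp(t_rf_{\ell_r})\cdots\exp(t_1f_{\ell_1})\cdot e_{\underline i_{\min}}$ is birational, giving $\mathbb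 K(\mathrm{Gr}_{d,n})\cong\mathbb K(t_r,\dots,t_1)$. On $\mathbb N^r$ (exponents $(a_r,\dots,a_1)$ of $t_r^{a_r}\cdots t_1^{a_1}$) let $>_{\mathrm{grlex}}$ compare first total degree, then $a_r$, then $a_{r-1}$, etc. For a nonzero polynomial $g=\sum\lambda_{\mathbf a}t^{\mathbf a}$, $\nu(g)=\min_{>_{\mathrm{grlex}}}\{\mathbf a\mid\lambda_{\mathbf a}\neq0\}$, extended to rational functions by $\nu(g/h)=\nu(g)-\nu(h)$; $\nu^b_{\mathfrak C_{\mathrm{right}}}$ is the resulting valuation on $\mathbb K(\mathrm{Gr}_{d,n})$. The coordinate $a_{k,j}$ in the claim is the exponent of the variable attached to the entry $\alpha_{k+j-1}$ of the $k$-th block. *)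

From HB Require Import structures.
From mathcomp Require Import all_boot all_order all_algebra.
From mathcomp Require Import mpoly.
Set Implicit Arguments. Unset Strict Implicit. Unset Printing Implicit Defensive.
Import Order.TTheory GRing.Theory.
Local Open Scope ring_scope.

(* Conventions (all 0-based internally):
   - r = d*(n-d); the polynomial ring K[t_1..t_r] is {mpoly K[r]}, the
     variable t_s being 'X_(s-1).
   - block k (1-based) = k0+1, entry j (1-based) = j0+1 : the factor
     exp(t f_{k+j-1}) uses the variable t_{(d-k)(n-d)+j}, i.e. mpoly index
     (d-1-k0)*(n-d)+j0.  This is exactly the labelling (t_r,...,t_1) of the
     sequence (alpha_{l_r},...,alpha_{l_1}) read from left to right. *)

Section Defs.
Variable K : fieldType.
Variables d n : nat.

Definition rk := (d * (n - d))%N.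

(* the variable with 0-based index i (0 if out of range; never happens) *)
Definition tvar (i : nat) : {mpoly K[rk]} :=
  match @insub _ (fun j => j < rk)%N _ i with
  | Some x => 'X_x
  | None => 0
  end.

(* fmat l = f_{l+1} = E_{l+2,l+1} (1-based indices), i.e. 0-based row l+1, column l;
   expf t l = exp(t f_{l+1}) = 1 + t f_{l+1} since f^2 = 0 *)

Definition fmat (l : nat) : 'M[{mpoly K[rk]}]_n :=
  \matrix_(a, b) ((a == l.+1 :> nat) && (b == l :> nat))%:R.

Definition expf (t : {mpoly K[rk]}) (l : nat) : 'M[{mpoly K[rk]}]_n :=
  1%:M + t *: fmat l.

(* list of factors, left to right:
   block k0 = 0..d-1, inside a block j0 = n-d-1 down to 0;
   the simple root index (0-based) of alpha_{k+j-1} is k0+j0. *)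
Definition factors : seq ('M[{mpoly K[rk]}]_n) :=
  [seq expf (tvar ((d.-1 - k0) * (n - d) + j0)) (k0 + j0)
     | k0 <- iota 0 d, j0 <- rev (iota 0 (n - d))].

Definition mmat : 'M[{mpoly K[rk]}]_n := foldr mulmx 1%:M factors.

(* Plucker coordinate P_j of g . e_{1..d}: coefficient of e_{j_1}/\../\e_{j_d}
   in g e_1 /\ ... /\ g e_d, i.e. the minor on rows j, columns 1..d. *)
Definition plucker (h : (d <= n)%N) (jj : 'I_d -> 'I_n)
  (M : 'M[{mpoly K[rk]}]_n) : {mpoly K[rk]} :=
  \det (\matrix_(a < d, b < d) M (jj a) (widen_ord h b)).

End Defs.

(* graded reverse-index lexicographic order: total degree, then a_r, a_{r-1},... *)
Fixpoint lexle (s t : seq nat) : bool :=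
  match s, t with
  | x :: s', y :: t' => (x < y)%N || ((x == y) && lexle s' t')
  | _, _ => true
  end.

Definition revexps (r : nat) (m : 'X_{1..r}) : seq nat :=
  [seq m i | i <- rev (enum 'I_r)].

Definition grlex_le (r : nat) (a b : 'X_{1..r}) : bool :=
  (mdeg a < mdeg b)%N || ((mdeg a == mdeg b) && lexle (revexps a) (revexps b)).

Definition is_nu (K : fieldType) (r : nat) (g : {mpoly K[r]}) (a : 'X_{1..r}) : bool :=
  (a \in msupp g) && all (grlex_le a) (msupp g).

(* nu(g/h) = nu(g) - nu(h) = v, as an integer vector indexed by the variable
   index (coordinate i = exponent of t_{i+1}). *)
Definition nu_ratio (K : fieldType) (r : nat) (g h : {mpoly K[r]}) (v : 'I_r -> int) : Prop :=
  exists a b, [/\ is_nu g a, is_nu h b & forall i, v i = (a i)%:Z - (b i)%:Z].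

(* expected valuation: coordinate with index i corresponds to (k0, j0) with
   i = (d-1-k0)*(n-d) + j0; it is 1 iff j = j0+1 <= j_k - k, where
   j_k = jj k0 + 1 and k = k0 + 1. *)
Definition expected (d n : nat) (jj : 'I_d -> 'I_n) (i : 'I_(rk d n)) : int :=
  let k0 := (d.-1 - i %/ (n - d))%N in
  let j0 := (i %% (n - d))%N in
  match @insub _ (fun k => k < d)%N _ k0 with
  | Some k => if (j0 < jj k - k0)%N then 1 else 0
  | None => 0
  end.

(* Write N_k for the product of the factors of blocks k, ..., d-1 (0-based), so that the
   matrix of the theorem is N_0 and N_d = 1.  The block-k factors only add multiples of row a-1
   to row a for k < a <= k + (n-d); hence N_k is lower unitriangular with (a, c) entry homogeneous
   of degree a - c in the variables of blocks >= k, column k of N_k is the monomial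
   t_{k,0} ... t_{k,a-k-1} in row a, and N_k - N_{k+1} only has monomials using block k.
   Expanding the minor of N_k on rows J_k < ... < J_{d-1} and columns k, ..., d-1 along its
   first column therefore gives X^mu_k * (minor of N_{k+1} + E), with mu_k = t_{k,0} ... t_{k,J_k-k-1}
   and every monomial of E using block k.  All these monomials have the same degree, and block k
   carries larger variable indices than the later blocks, so the grlex-minimal exponent is mu_k
   plus that of the smaller minor.  By induction nu(P_J) = mu_0 + ... + mu_{d-1}, and nu(P_{i_min}) = 0. *)

From HB Require Import structures.
From mathcomp Require Import all_boot all_order all_algebra.
From mathcomp Require Import mpoly.
From mathcomp Require Import perm zify.
Set Implicit Arguments. Unset Strict Implicit. Unset Printing Implicit Defensive.
Import Order.TTheory GRing.Theory.
Local Open Scope ring_scope.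

Section MsuppAll.
Variables (R : nzRingType) (r : nat).
Implicit Types (Q : 'X_{1..r} -> Prop) (p q : {mpoly R[r]}) (m : 'X_{1..r}).

Definition msupp_all Q p := forall m, m \in msupp p -> Q m.

Lemma msupp_all0 Q : msupp_all Q 0.
Proof. by move=> m; rewrite msupp0. Qed.

Lemma msupp_allD Q p q : msupp_all Q p -> msupp_all Q q -> msupp_all Q (p + q).
Proof. by move=> hp hq m /msuppD_le; rewrite mem_cat => /orP[/hp|/hq]. Qed.

Lemma msupp_allN Q p : msupp_all Q p -> msupp_all Q (- p).
Proof. by move=> hp m; rewrite (perm_mem (msuppN _)) => /hp. Qed.

Lemma msupp_all_sum Q (I : Type) (s : seq I) (P : pred I) (F : I -> {mpoly R[r]}) :
  (forall i, P i -> msupp_all Q (F i)) -> msupp_all Q (\sum_(i <- s | P i) F i).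
Proof. by move=> h; apply: big_ind => //; [exact: msupp_all0|exact: msupp_allD]. Qed.

Lemma msupp_allM (Q1 Q2 Q3 : 'X_{1..r} -> Prop) p q :
  (forall m1 m2, Q1 m1 -> Q2 m2 -> Q3 (m1 + m2)%MM) ->
  msupp_all Q1 p -> msupp_all Q2 q -> msupp_all Q3 (p * q).
Proof.
move=> hQ hp hq m /msuppM_le /allpairsP [[m1 m2] /= [h1 h2 ->]].
by apply: hQ; [apply: hp|apply: hq].
Qed.

Lemma msupp_allX Q m : Q m -> msupp_all Q 'X_[m].
Proof. by move=> h m'; rewrite msuppX mem_seq1 => /eqP ->. Qed.

Lemma msupp_all1 Q : Q 0%MM -> msupp_all Q 1.
Proof. by move=> h m'; rewrite msupp1 mem_seq1 => /eqP ->. Qed.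

Lemma msupp_all_sign Q (b : bool) : Q 0%MM -> msupp_all Q ((-1) ^+ b).
Proof. by move=> h; case: b; rewrite ?expr1 ?expr0; [apply: msupp_allN|]; apply: msupp_all1. Qed.

Lemma msupp_all_nat Q (b : bool) : Q 0%MM -> msupp_all Q b%:R.
Proof. by move=> h; case: b; [apply: msupp_all1|apply: msupp_all0]. Qed.

Section UpwardClosed.
Variable Q : 'X_{1..r} -> Prop.
Hypothesis Q_addr : forall m1 m2, Q m1 -> Q (m1 + m2)%MM.

Lemma msupp_all_mulr p q : msupp_all Q p -> msupp_all Q (p * q).
Proof. by move=> hp; apply: (msupp_allM (Q2 := fun _ => True) _ hp) => // m1 m2 /Q_addr. Qed.

Lemma msupp_all_mull p q : msupp_all Q q -> msupp_all Q (p * q).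
Proof.
move=> hq; apply: (msupp_allM (Q1 := fun _ => True) _ _ hq) => // m1 m2 _.
by rewrite addmC; apply: Q_addr.
Qed.

Lemma msupp_all_prodB (I : Type) (s : seq I) (F G : I -> {mpoly R[r]}) :
  (forall i, msupp_all Q (F i - G i)) ->
  msupp_all Q (\prod_(i <- s) F i - \prod_(i <- s) G i).
Proof.
move=> h; elim: s => [|x s IH]; first by rewrite !big_nil subrr; apply: msupp_all0.
rewrite !big_cons.
have -> : F x * \prod_(j <- s) F j - G x * \prod_(j <- s) G j =
   F x * (\prod_(j <- s) F j - \prod_(j <- s) G j) + (F x - G x) * \prod_(j <- s) G j.
  by rewrite mulrBr mulrBl addrA subrK.
by apply: msupp_allD; [apply: msupp_all_mull|apply: msupp_all_mulr].
Qed.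

Lemma msupp_all_detB k (A B : 'M[{mpoly R[r]}]_k) :
  (forall i j, msupp_all Q (A i j - B i j)) -> msupp_all Q (\det A - \det B).
Proof.
move=> h; rewrite /determinant -sumrB; apply: msupp_all_sum => s _.
by rewrite -mulrBr; apply/msupp_all_mull/msupp_all_prodB.
Qed.

End UpwardClosed.

Section AdditivelyClosed.
Variable Q : 'X_{1..r} -> Prop.
Hypotheses (Q0 : Q 0%MM) (QD : forall m1 m2, Q m1 -> Q m2 -> Q (m1 + m2)%MM).

Lemma msupp_all_prod (I : Type) (s : seq I) (F : I -> {mpoly R[r]}) :
  (forall i, msupp_all Q (F i)) -> msupp_all Q (\prod_(i <- s) F i).
Proof.
move=> h; apply: big_ind => //; first exact: msupp_all1.
by move=> x y; apply: msupp_allM.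
Qed.

Lemma msupp_all_det k (A : 'M[{mpoly R[r]}]_k) :
  (forall i j, msupp_all Q (A i j)) -> msupp_all Q (\det A).
Proof.
move=> h; apply: msupp_all_sum => s _.
by apply: (msupp_allM QD); [exact: msupp_all_sign|exact: msupp_all_prod].
Qed.

End AdditivelyClosed.

Definition mdeg_is (D : int) m := (mdeg m)%:Z = D.

Lemma mdeg_isD D1 D2 m1 m2 :
  mdeg_is D1 m1 -> mdeg_is D2 m2 -> mdeg_is (D1 + D2) (m1 + m2)%MM.
Proof. by rewrite /mdeg_is mdegD => <- <-; rewrite PoszD. Qed.

Lemma msupp_all_mdeg_prod (I : Type) (s : seq I) (F : I -> {mpoly R[r]}) (D : I -> int) :
  (forall i, msupp_all (mdeg_is (D i)) (F i)) ->
  msupp_all (mdeg_is (\sum_(i <- s) D i)) (\prod_(i <- s) F i).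
Proof.
move=> h; elim: s => [|x s IH].
  by rewrite !big_nil; apply: msupp_all1; rewrite /mdeg_is mdeg0.
by rewrite !big_cons; apply: (msupp_allM (@mdeg_isD _ _)).
Qed.

Lemma msupp_all_mdeg_det k (A : 'M[{mpoly R[r]}]_k) (x y : 'I_k -> int) :
  (forall i j, msupp_all (mdeg_is (x i - y j)) (A i j)) ->
  msupp_all (mdeg_is (\sum_i x i - \sum_i y i)) (\det A).
Proof.
move=> h; apply: msupp_all_sum => s _.
have -> : \sum_i x i - \sum_i y i = 0 + \sum_i (x i - y (s i)).
  by rewrite add0r sumrB; congr (_ - _); apply: (reindex_perm s).
apply: (msupp_allM (@mdeg_isD _ _)).
  by apply: msupp_all_sign; rewrite /mdeg_is mdeg0.
exact: msupp_all_mdeg_prod.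
Qed.

End MsuppAll.

Section GrlexMinimum.
Variables (K : fieldType) (r : nat).
Implicit Types (a b u : 'X_{1..r}) (p P E : {mpoly K[r]}).

Lemma lexle_refl s : lexle s s.
Proof. by elim: s => //= x s ->; rewrite ltnn eqxx. Qed.

Lemma lexle_map_addl (s : seq 'I_r) u a b :
  lexle [seq (u + a)%MM i | i <- s] [seq (u + b)%MM i | i <- s] =
  lexle [seq a i | i <- s] [seq b i | i <- s].
Proof. by elim: s => [|x s IH] //=; rewrite !mnmDE ltn_add2l eqn_add2l IH. Qed.

Lemma grlex_le_add2l u a b : grlex_le (u + a)%MM (u + b)%MM = grlex_le a b.
Proof. by rewrite /grlex_le /revexps !mdegD ltn_add2l eqn_add2l lexle_map_addl. Qed.

Lemma lexle_map_sorted (s : seq 'I_r) a b (i : 'I_r) :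
  sorted (fun x y : 'I_r => (y < x)%N) s -> i \in s -> (a i < b i)%N ->
  (forall j : 'I_r, (i < j)%N -> a j = b j) ->
  lexle [seq a x | x <- s] [seq b x | x <- s].
Proof.
move=> + + ab_i ab_gt; elim: s => [|x s IH] //= s_sorted.
rewrite in_cons => /orP [/eqP <-|i_s]; first by rewrite ab_i.
have i_lt_x : (i < x)%N.
  have lt_trans : transitive (fun y z : 'I_r => (z < y)%N).
    by move=> y z t /= zy tz; apply: ltn_trans tz zy.
  by move/allP: (order_path_min lt_trans s_sorted); apply.
by rewrite ab_gt // ltnn eqxx /= IH // (path_sorted s_sorted).
Qed.

Lemma revexps_lexle a b (i : 'I_r) : (a i < b i)%N ->
  (forall j : 'I_r, (i < j)%N -> a j = b j) -> lexle (revexps a) (revexps b).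
Proof.
apply: lexle_map_sorted; last by rewrite mem_rev mem_enum.
rewrite rev_sorted; have := iota_ltn_sorted 0 r.
by rewrite -val_enum_ord sorted_map.
Qed.

Lemma grlex_le_lastdiff a b (i : 'I_r) : mdeg a = mdeg b -> (a i < b i)%N ->
  (forall j : 'I_r, (i < j)%N -> a j = b j) -> grlex_le a b.
Proof.
by move=> deg_ab ab_i ab_gt; rewrite /grlex_le deg_ab ltnn eqxx (revexps_lexle ab_i).
Qed.

Lemma is_nu1 : is_nu (1 : {mpoly K[r]}) 0%MM.
Proof.
rewrite /is_nu msupp1 inE eqxx /= andbT /grlex_le ltnn eqxx /=.
exact: lexle_refl.
Qed.

Lemma is_nu_mulX p a u : is_nu p a -> is_nu (p * 'X_[u]) (u + a)%MM.
Proof.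
move=> /andP [a_p a_min]; rewrite /is_nu (perm_mem (msuppMX _ _)) map_f //=.
apply/allP => b; rewrite (perm_mem (msuppMX _ _)) => /mapP [b' b'_p ->].
by rewrite grlex_le_add2l (allP a_min).
Qed.

Lemma msuppD_notinr P E a : a \in msupp P -> a \notin msupp E -> a \in msupp (P + E).
Proof. by move=> a_P a_E; rewrite mcoeff_msupp mcoeffD (memN_msupp_eq0 a_E) addr0 -mcoeff_msupp. Qed.

Lemma is_nu_addr P E a : is_nu P a -> a \notin msupp E ->
  {in msupp (P + E), forall b, b \in msupp E -> grlex_le a b} -> is_nu (P + E) a.
Proof.
move=> /andP [a_P a_min] a_E E_ge; rewrite /is_nu msuppD_notinr //=.
apply/allP => b b_PE; have := msuppD_le b_PE; rewrite mem_cat => /orP [b_P|b_E].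
  exact: (allP a_min).
exact: E_ge.
Qed.

End GrlexMinimum.

Section Blocks.
Variables (K : fieldType) (d n : nat).
Hypothesis d_lt_n : (d < n)%N.

Local Notation r := (rk d n).
Local Notation w := (n - d)%N.
Local Notation R := {mpoly K[r]}.
Local Notation MT := ('M[R]_n).

Lemma w_gt0 : (0 < w)%N.
Proof. lia. Qed.

Definition var_index (k j : nat) := ((d.-1 - k) * w + j)%N.
Definition block_of (i : nat) := (d.-1 - i %/ w)%N.
Definition blockvar (k j : nat) : R := tvar K d n (var_index k j).

Lemma var_index_lt k j : (k < d)%N -> (j < w)%N -> (var_index k j < r)%N.
Proof.
move=> hk hj; rewrite /var_index /rk.
have -> : d = (d.-1 - k).+1 + k by lia.
rewrite mulnDl mulSn; nia.
Qed.

Lemma var_index_div k j : (j < w)%N -> (var_index k j %/ w = d.-1 - k)%N.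
Proof. by move=> hj; rewrite /var_index divnMDl ?w_gt0 // divn_small // addn0. Qed.

Lemma var_index_mod k j : (j < w)%N -> (var_index k j %% w = j)%N.
Proof. by move=> hj; rewrite /var_index modnMDl modn_small. Qed.

Lemma div_ord_lt (i : 'I_r) : (i %/ w < d)%N.
Proof. by rewrite ltn_divLR ?w_gt0 // mulnC; apply: ltn_ord. Qed.

Lemma block_of_mono (i j : 'I_r) : (i <= j)%N -> (block_of j <= block_of i)%N.
Proof. by move=> h; rewrite /block_of leq_sub2l // leq_div2r. Qed.

Lemma ord_eq_block (i i' : 'I_r) :
  (i == i') = (block_of i == block_of i') && (i %% w == i' %% w)%N.
Proof.
apply/eqP/andP => [->//|[/eqP h1 /eqP h2]]; apply: val_inj => /=.
rewrite (divn_eq i w) (divn_eq i' w) h2; congr (_ * _ + _)%N.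
have := div_ord_lt i; have := div_ord_lt i'; rewrite /block_of in h1; lia.
Qed.

Lemma blockvarP k j : (k < d)%N -> (j < w)%N ->
  exists i : 'I_r, [/\ block_of i = k, (i %% w = j)%N & blockvar k j = 'X_[U_(i)]].
Proof.
move=> hk hj; rewrite /blockvar /tvar; case: insubP => [i _ ei|]; last first.
  by rewrite var_index_lt.
exists i; split => //; last by rewrite ei var_index_mod.
by rewrite /block_of ei var_index_div //; lia.
Qed.

Definition no_var_below (b : nat) (m : 'X_{1..r}) :=
  forall i : 'I_r, (block_of i < b)%N -> m i = 0%N.

Definition has_var_in_block (k : nat) (m : 'X_{1..r}) :=
  exists i : 'I_r, (block_of i == k) && (0 < m i)%N.

Lemma no_var_below0 b : no_var_below b 0%MM.
Proof. by move=> i _; rewrite mnm0E. Qed.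

Lemma no_var_belowD b m1 m2 :
  no_var_below b m1 -> no_var_below b m2 -> no_var_below b (m1 + m2)%MM.
Proof. by move=> h1 h2 i hi; rewrite mnmDE h1 // h2. Qed.

Lemma has_var_in_block_addr k m1 m2 :
  has_var_in_block k m1 -> has_var_in_block k (m1 + m2)%MM.
Proof.
by case=> i /andP[h1 h2]; exists i; rewrite h1 mnmDE (leq_trans h2) ?leq_addr.
Qed.

Lemma blockvar_no_var_below b k j : (k < d)%N -> (j < w)%N -> (b <= k)%N ->
  msupp_all (no_var_below b) (blockvar k j).
Proof.
move=> hk hj hbk; have [i [ik _ ->]] := blockvarP hk hj.
by apply: msupp_allX => i' hi'; rewrite mnm1E; case: eqP => // ii'; subst i'; lia.
Qed.

Lemma blockvar_mdeg k j : (k < d)%N -> (j < w)%N -> msupp_all (mdeg_is 1) (blockvar k j).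
Proof.
move=> hk hj; have [i [_ _ ->]] := blockvarP hk hj.
by apply: msupp_allX; rewrite /mdeg_is mdeg1.
Qed.

Lemma blockvar_has_var k j : (k < d)%N -> (j < w)%N ->
  msupp_all (has_var_in_block k) (blockvar k j).
Proof.
move=> hk hj; have [i [ik _ ->]] := blockvarP hk hj.
by apply: msupp_allX; exists i; rewrite mnm1E eqxx ik eqxx.
Qed.

(* Blocks of larger index carry smaller variable indices, which the order compares last. *)
Lemma grlex_le_block k a b : mdeg a = mdeg b ->
  no_var_below k a -> no_var_below k b ->
  (forall i : 'I_r, block_of i = k -> a i = 0%N) -> has_var_in_block k b ->
  grlex_le a b.
Proof.
move=> deg_ab a_low b_low a_k [i0 /andP [/eqP i0k b_i0]].
have ab_i0 : a i0 != b i0 by rewrite a_k // eq_sym -lt0n.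
have [i ab_i i_max] := @arg_maxnP 'I_r i0 (fun j => a j != b j) val ab_i0.
have ik : block_of i = k.
  have := block_of_mono (i_max _ ab_i0); rewrite i0k leq_eqVlt => /orP [/eqP //|ik].
  by move: ab_i; rewrite a_low // b_low.
apply: (grlex_le_lastdiff (i := i)) => //.
  by move: ab_i; rewrite a_k // lt0n eq_sym.
move=> j ij; apply/eqP; apply: contraT => ab_j.
by have /= := i_max j ab_j; rewrite leqNgt ij.
Qed.

(* Entries indexed by naturals and zero outside the matrix, so that row a.-1 needs no bound proof. *)
Definition entry (Z : MT) (a c : nat) : R :=
  if insub a is Some a' then if insub c is Some c' then Z a' c' else 0 else 0.

Lemma entryE (Z : MT) (a c : 'I_n) : entry Z a c = Z a c.
Proof. by rewrite /entry !valK. Qed.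

Lemma entry_out (Z : MT) a c : (n <= a)%N || (n <= c)%N -> entry Z a c = 0.
Proof.
rewrite /entry; case: insubP => [a' _ <-|//]; case: insubP => [c' _ <-|//].
by rewrite leqNgt ltn_ord /= leqNgt ltn_ord.
Qed.

Lemma entry1 a c : entry 1%:M a c = ((a == c) && (a < n)%N)%:R.
Proof.
case: (ltnP a n) => ha; last by rewrite entry_out ?ha // andbF.
case: (ltnP c n) => hc; last by rewrite entry_out ?hc ?orbT //; case: eqP => // ac; lia.
by rewrite -[a]/(val (Ordinal ha)) -[c]/(val (Ordinal hc)) entryE mxE /= andbT.
Qed.

Lemma entry_expf_mul (Z : MT) t l a c : (l.+1 < n)%N ->
  entry (expf t l *m Z) a c =
  entry Z a c + (if a == l.+1 then t * entry Z l c else 0).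
Proof.
move=> hl; case: (ltnP a n) => ha; last first.
  rewrite !(entry_out _ (a := a)) ?ha // add0r.
  by case: eqP => // al; rewrite al leqNgt hl in ha.
case: (ltnP c n) => hc; last by rewrite !entry_out ?hc ?orbT // add0r mulr0 if_same.
have hl' : (l < n)%N by apply: ltnW.
rewrite -[a]/(val (Ordinal ha)) -[c]/(val (Ordinal hc)) -[l]/(val (Ordinal hl')) !entryE.
rewrite /expf mulmxDl mul1mx -scalemxAl !mxE; congr (_ + _).
rewrite (bigD1 (Ordinal hl')) //= big1 ?addr0 => [|j jl]; last first.
  rewrite mxE (_ : (j == l :> nat) = false) ?andbF ?mul0r //.
  by apply: contraNF jl => /eqP jl; apply/eqP/val_inj.
by rewrite mxE eqxx andbT /=; case: eqP => _; rewrite ?mul1r ?mul0r ?mulr0.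
Qed.

Definition block_factors (k m : nat) : seq MT :=
  [seq expf (blockvar k j) (k + j) | j <- rev (iota 0 m)].

Definition tail_prod (k : nat) : MT :=
  foldr mulmx 1%:M (flatten [seq block_factors k0 w | k0 <- iota k (d - k)]).

Lemma block_factorsS k m :
  block_factors k m.+1 = expf (blockvar k m) (k + m) :: block_factors k m.
Proof. by rewrite /block_factors -addn1 iotaD rev_cat. Qed.

Lemma mmat_tail_prod : mmat K d n = tail_prod 0.
Proof. by rewrite /mmat /factors /tail_prod subn0. Qed.

Lemma tail_prod_d : tail_prod d = 1%:M.
Proof. by rewrite /tail_prod subnn. Qed.

Lemma tail_prodS k : (k < d)%N ->
  tail_prod k = foldr mulmx (tail_prod k.+1) (block_factors k w).
Proof. by move=> hk; rewrite /tail_prod -(subnSK hk) /= foldr_cat. Qed.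

Lemma entry_block_factors k X m a c : (k < d)%N -> (m <= w)%N ->
  let Z := foldr mulmx X (block_factors k m) in
  entry Z a c = (if (k < a <= k + m)%N then blockvar k (a.-1 - k) * entry Z a.-1 c else 0)
                + entry X a c.
Proof.
move=> hk; elim: m => [|m IH] hm /=.
  by rewrite addn0; case: (k < a <= k)%N /andP => [[]|]; [lia|rewrite add0r].
have km_lt : ((k + m).+1 < n)%N by lia.
rewrite block_factorsS /= !entry_expf_mul //.
have {IH} := IH (ltnW hm); set Z := foldr _ _ _ => ->.
have [->|a_ne] := eqVneq a (k + m).+1.
  rewrite ifF; last by lia.
  rewrite ifT; last by lia.
  rewrite ifF; last by lia.
  by rewrite add0r addr0 addrC; congr (_ * _ + _); congr (blockvar _ _); lia.
rewrite addr0; case: ifP => h1; case: ifP => h2 //; try lia.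
by rewrite ifF ?addr0 //; lia.
Qed.

Lemma entry_tail_prod k a c : (k < d)%N ->
  entry (tail_prod k) a c =
  (if (k < a <= k + w)%N then blockvar k (a.-1 - k) * entry (tail_prod k) a.-1 c else 0)
  + entry (tail_prod k.+1) a c.
Proof. by move=> hk; rewrite tail_prodS //; apply: entry_block_factors. Qed.

Definition tail_shape (b l : nat) (Z : MT) := forall a c,
  [/\ (a < c)%N -> entry Z a c = 0,
      msupp_all (no_var_below b) (entry Z a c),
      msupp_all (mdeg_is (Posz a - Posz c)) (entry Z a c)
    & (c < l)%N -> entry Z a c = (a == c)%:R].

Lemma tail_shape1 b l : (l <= n)%N -> tail_shape b l 1%:M.
Proof.
move=> hl a c; rewrite entry1; split.
- by move=> ac; case: eqP => // ac'; lia.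
- by apply: msupp_all_nat; apply: no_var_below0.
- case: eqP => [->|_] /=; last exact: msupp_all0.
  by apply: msupp_all_nat; rewrite /mdeg_is mdeg0 subrr.
- by move=> cl; case: eqP => //= ->; rewrite (leq_trans cl hl).
Qed.

Lemma tail_shape_weaken b l b' l' Z :
  (b' <= b)%N -> (l' <= l)%N -> tail_shape b l Z -> tail_shape b' l' Z.
Proof.
move=> bb ll hZ a c; have [h1 h2 h3 h4] := hZ a c; split => //.
- by move=> m /h2 hm i hi; apply: hm; apply: leq_trans bb.
- by move=> cl; apply: h4; apply: leq_trans ll.
Qed.

Lemma tail_shape_expf b l Z t j : (l <= j)%N -> (j.+1 < n)%N ->
  msupp_all (no_var_below b) t -> msupp_all (mdeg_is 1) t ->
  tail_shape b l Z -> tail_shape b l (expf t j *m Z).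
Proof.
move=> lj jn t_low t_deg hZ a c; rewrite entry_expf_mul //.
have [h1 h2 h3 h4] := hZ a c; have [g1 g2 g3 g4] := hZ j c.
split.
- move=> ac; rewrite h1 // add0r; case: eqP => // aj; rewrite g1 ?mulr0 //; lia.
- apply: msupp_allD => //; case: eqP => _; last exact: msupp_all0.
  exact: (msupp_allM (@no_var_belowD b)).
- apply: msupp_allD => //; case: eqP => aj; last exact: msupp_all0.
  have -> : Posz a - Posz c = 1 + (Posz j - Posz c) by rewrite aj; lia.
  by apply: (msupp_allM _ t_deg g3) => m1 m2; apply: mdeg_isD.
- move=> cl; rewrite h4 // g4 // (_ : (j == c) = false); last by lia.
  by rewrite mulr0 if_same addr0.
Qed.

Lemma tail_shape_block_factors k m X : (k < d)%N -> (m <= w)%N ->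
  tail_shape k k X -> tail_shape k k (foldr mulmx X (block_factors k m)).
Proof.
move=> hk; elim: m => [|m IH] hm hX //.
rewrite block_factorsS /=; apply: tail_shape_expf.
- exact: leq_addr.
- lia.
- exact: blockvar_no_var_below.
- exact: blockvar_mdeg.
- by apply: IH => //; apply: ltnW.
Qed.

Lemma tail_shape_tail_prod k : (k <= d)%N -> tail_shape k k (tail_prod k).
Proof.
move=> hk; rewrite -(subKn hk); elim: (d - k)%N (leq_subr k d) => [|m IH] hm.
  by rewrite subn0 tail_prod_d; apply: tail_shape1; apply: ltnW.
have hdm : (d - m.+1 < d)%N by lia.
rewrite tail_prodS // (_ : (d - m.+1).+1 = d - m)%N; last by lia.
apply: tail_shape_block_factors => //.
by apply: tail_shape_weaken (IH (ltnW hm)); lia.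
Qed.

Definition block_mono (k p : nat) : 'X_{1..r} :=
  [multinom ((block_of i == k) && (i %% w < p)%N : nat) | i < r].

Lemma block_mono0 k : block_mono k 0 = 0%MM.
Proof. by apply/mnmP => i; rewrite mnmE mnm0E ltn0 andbF. Qed.

Lemma blockvar_block_mono k p : (k < d)%N -> (p < w)%N ->
  blockvar k p * 'X_[block_mono k p] = 'X_[block_mono k p.+1].
Proof.
move=> hk hp; have [i [ik ip ->]] := blockvarP hk hp; rewrite -mpolyXD; congr 'X_[_].
apply/mnmP => i'; rewrite mnmDE mnm1E !mnmE ord_eq_block ik ip.
case: (block_of i' =P k) => [<-|ne] /=; last by move/eqP: ne; rewrite eq_sym => /negbTE ->.
by rewrite eqxx /= ltnS; case: ltngtP.
Qed.

Lemma tail_prod_col k a : (k < d)%N ->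
  entry (tail_prod k) a k =
  if (k <= a <= k + w)%N then 'X_[block_mono k (a - k)] else 0.
Proof.
move=> hk; have shape := tail_shape_tail_prod hk.
elim: a => [|a IH]; rewrite entry_tail_prod //.
  have [_ _ _ ->] // := shape 0%N k; rewrite ltn0 add0r leqn0 /= eq_sym.
  by case: eqP => [->|] //=; rewrite block_mono0 mpolyX0.
have [_ _ _ ->] // := shape a.+1 k.
case: (boolP (k < a.+1 <= k + w)%N) => ha.
  rewrite IH ifT; last by lia.
  rewrite ifT; last by lia.
  rewrite (_ : a.+1 == k = false) ?addr0; last by lia.
  by rewrite /= (_ : a.+1 - k = (a - k).+1)%N ?blockvar_block_mono //; lia.
rewrite add0r; case: eqP => [<-|ne] /=; first by rewrite leqnn leq_addr subnn block_mono0 mpolyX0.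
by rewrite ifF //; lia.
Qed.

Lemma tail_prod_col_factor k b a : (k < d)%N -> (k <= b <= k + w)%N -> (b < a)%N ->
  exists2 v, entry (tail_prod k) a k = 'X_[block_mono k (b - k)] * v
           & msupp_all (has_var_in_block k) v.
Proof.
move=> hk hb ba; rewrite tail_prod_col //.
case: ifP => ha; last by exists 0; rewrite ?mulr0 //; apply: msupp_all0.
exists 'X_[block_mono k (a - k) - block_mono k (b - k)].
  rewrite -mpolyXD; congr 'X_[_]; apply/mnmP => i.
  rewrite mnmDE mnmBE !mnmE; case: (block_of i == k) => //=.
  case: (ltnP (i %% w) (b - k)) => h /=; last by rewrite subn0.
  by rewrite (_ : (i %% w < a - k)%N = true) //; lia.
have [i [ik ib _]] := blockvarP (j := (b - k)%N) hk ltac:(lia).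
apply: msupp_allX; exists i; rewrite ik eqxx mnmBE !mnmE ik eqxx ib ltnn subn0 /=.
by rewrite (_ : (b - k < a - k)%N = true) //; lia.
Qed.

Definition tail_minor (J : nat -> nat) (k m : nat) : R :=
  \det (\matrix_(i < m, c < m) entry (tail_prod k) (J (k + i)%N) (k + c)%N).

Lemma tail_minor_no_var_below J k m : (k <= d)%N ->
  msupp_all (no_var_below k) (tail_minor J k m).
Proof.
move=> hk; apply: msupp_all_det; [exact: no_var_below0|exact: no_var_belowD|].
by move=> i c; rewrite mxE; have [] := tail_shape_tail_prod hk (J (k + i)%N) (k + c)%N.
Qed.

Lemma tail_minor_mdeg J k m : (k <= d)%N ->
  msupp_all (mdeg_is (\sum_(i < m) Posz (J (k + i)%N) - \sum_(i < m) Posz (k + i)%N))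
    (tail_minor J k m).
Proof.
move=> hk; apply: msupp_all_mdeg_det => i c.
by rewrite mxE; have [] := tail_shape_tail_prod hk (J (k + i)%N) (k + c)%N.
Qed.

(* Laplace expansion along the first column, which is a monomial column by tail_prod_col. *)
Lemma tail_minor_expand J k m : (k < d)%N -> (k <= J k <= k + w)%N ->
  (forall j, (j < m)%N -> (J k < J (k + j.+1))%N) ->
  exists2 E, tail_minor J k m.+1 = (tail_minor J k.+1 m + E) * 'X_[block_mono k (J k - k)]
           & msupp_all (has_var_in_block k) E.
Proof.
move=> hk hJk hJ; set u := block_mono k (J k - k).
set A := \matrix_(i < m.+1, c < m.+1) entry (tail_prod k) (J (k + i)%N) (k + c)%N.
set B := \matrix_(i < m, c < m) entry (tail_prod k) (J (k.+1 + i)%N) (k.+1 + c)%N.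
have A00 : A ord0 ord0 = 'X_[u] by rewrite mxE !addn0 tail_prod_col // hJk.
have cofA00 : cofactor A ord0 ord0 = \det B.
  rewrite /cofactor /= expr0 mul1r; congr (\det _); apply/matrixP => i c.
  by rewrite !mxE /= /bump /= !add1n !addnS.
have [V sumV V_has] : exists2 V,
    \sum_(i < m) A (lift ord0 i) ord0 * cofactor A (lift ord0 i) ord0 = 'X_[u] * V
    & msupp_all (has_var_in_block k) V.
  apply: (big_ind (fun p => exists2 v, p = 'X_[u] * v & msupp_all (has_var_in_block k) v)).
  - by exists 0; rewrite ?mulr0 //; apply: msupp_all0.
  - move=> p q [v1 -> h1] [v2 -> h2]; exists (v1 + v2); first by rewrite mulrDr.
    exact: msupp_allD.
  - move=> j _; rewrite mxE /= /bump /= add1n addn0.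
    have [v -> v_has] := tail_prod_col_factor hk hJk (hJ j (ltn_ord j)).
    exists (v * cofactor A (lift ord0 j) ord0); first by rewrite mulrA.
    exact: msupp_all_mulr (@has_var_in_block_addr k) _ _ v_has.
have B_has : msupp_all (has_var_in_block k) (\det B - tail_minor J k.+1 m).
  apply: (msupp_all_detB (@has_var_in_block_addr k)) => i c.
  rewrite !mxE entry_tail_prod // addrK; case: ifP => h; last exact: msupp_all0.
  by apply: (msupp_all_mulr (@has_var_in_block_addr k)); apply: blockvar_has_var => //; lia.
exists (\det B - tail_minor J k.+1 m + V); last exact: msupp_allD.
rewrite {1}/tail_minor -/A (expand_det_col _ ord0) big_ord_recl A00 cofA00 sumV.
by rewrite -mulrDr [RHS]mulrC addrA [tail_minor _ _ _ + _]addrC subrK.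
Qed.

Lemma is_nu_block_step k (P E : R) a u D :
  is_nu P a -> msupp_all (no_var_below k.+1) P -> msupp_all (has_var_in_block k) E ->
  msupp_all (no_var_below k) ((P + E) * 'X_[u]) ->
  msupp_all (mdeg_is D) ((P + E) * 'X_[u]) ->
  is_nu ((P + E) * 'X_[u]) (u + a)%MM.
Proof.
move=> a_nu P_low E_has PE_low PE_deg; apply: is_nu_mulX.
have a_P : a \in msupp P by case/andP: a_nu.
have a_k (i : 'I_r) : block_of i = k -> a i = 0%N by move=> ik; apply: P_low; rewrite ?ik.
have a_E : a \notin msupp E by apply/negP => /E_has [i /andP [/eqP /a_k -> ]].
have in_PEX b : b \in msupp (P + E) -> (u + b)%MM \in msupp ((P + E) * 'X_[u]).
  by move=> b_PE; rewrite (perm_mem (msuppMX _ _)) map_f.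
apply: is_nu_addr => // b b_PE b_E; apply: (grlex_le_block (k := k)) => //.
- have := PE_deg _ (in_PEX _ b_PE); have := PE_deg _ (in_PEX _ (msuppD_notinr a_P a_E)).
  by rewrite /mdeg_is !mdegD => <- [] /addnI ->.
- by move=> i ik; apply: P_low => //; apply: ltnW.
- move=> i ik; move/eqP: (PE_low _ (in_PEX _ b_PE) i ik).
  by rewrite mnmDE addn_eq0 => /andP [_ /eqP].
- exact: E_has.
Qed.

Lemma is_nu_tail_minor J m : (m <= d)%N ->
  (forall k, (k < d)%N -> (k <= J k <= k + w)%N) ->
  (forall k k', (k < k')%N -> (k' < d)%N -> (J k < J k')%N) ->
  is_nu (tail_minor J (d - m) m) (\sum_(d - m <= k < d) block_mono k (J k - k))%MM.
Proof.
move=> + J_bounds J_mono; elim: m => [|m IH] hm.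
  by rewrite /tail_minor det_mx00 subn0 big_geq //; apply: is_nu1.
have hk : (d - m.+1 < d)%N by lia.
move: (IH (ltnW hm)); rewrite (_ : d - m = (d - m.+1).+1)%N => [{}IH|]; last by lia.
have [|E minorE E_has] := tail_minor_expand (J := J) (m := m) hk (J_bounds _ hk).
  by move=> j hj; apply: J_mono; lia.
rewrite big_ltn // minorE; apply: (is_nu_block_step IH _ E_has).
- exact: tail_minor_no_var_below.
- by rewrite -minorE; apply: tail_minor_no_var_below; apply: ltnW.
- by rewrite -minorE; apply: tail_minor_mdeg; apply: ltnW.
Qed.

End Blocks.

Lemma strict_mono_gap (J : nat -> nat) d :
  (forall k k', (k < k')%N -> (k' < d)%N -> (J k < J k')%N) ->
  forall k k', (k <= k' < d)%N -> (J k + (k' - k) <= J k')%N.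
Proof.
move=> J_mono k; elim=> [|k' IH] /andP [kk' k'd]; first by rewrite (_ : k = 0)%N; lia.
have [<-|kk''] := eqVneq k k'.+1; first by rewrite subnn addn0.
have := IH ltac:(lia); have := J_mono k' k'.+1 (ltnSn k') k'd; lia.
Qed.

Lemma is_nu_plucker (K : fieldType) d n (hdn : (d < n)%N) (jj : 'I_d -> 'I_n) (J : nat -> nat) :
  (forall k : 'I_d, J k = jj k) -> (forall a b : 'I_d, (a < b)%N -> (jj a < jj b)%N) ->
  is_nu (plucker (ltnW hdn) jj (mmat K d n)) (\sum_(0 <= k < d) block_mono d n k (J k - k))%MM.
Proof.
move=> Jjj jj_mono.
have J_mono k k' : (k < k')%N -> (k' < d)%N -> (J k < J k')%N.
  move=> kk' k'd; have kd := ltn_trans kk' k'd.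
  by rewrite -[k]/(val (Ordinal kd)) -[k']/(val (Ordinal k'd)) !Jjj jj_mono.
have J_bounds k : (k < d)%N -> (k <= J k <= k + (n - d))%N.
  move=> kd; have := strict_mono_gap J_mono (k := 0) (k' := k).
  have := strict_mono_gap J_mono (k := k) (k' := d.-1).
  have last_d : (d.-1 < d)%N by lia.
  have := Jjj (Ordinal last_d); have := ltn_ord (jj (Ordinal last_d)) => /=; lia.
have minorE : plucker (ltnW hdn) jj (mmat K d n) = tail_minor K d n J 0 d.
  rewrite /plucker mmat_tail_prod; congr (\det _); apply/matrixP => a b.
  by rewrite !mxE !add0n Jjj -[val b]/(val (widen_ord (ltnW hdn) b)) entryE.
by rewrite minorE -[0%N](subnn d); apply: is_nu_tail_minor.
Qed.

Lemma expected_block_mono d n (jj : 'I_d -> 'I_n) (J : nat -> nat) (i : 'I_(rk d n)) :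
  (forall k : 'I_d, J k = jj k) ->
  expected jj i = ((\sum_(0 <= k < d) block_mono d n k (J k - k))%MM i)%:Z.
Proof.
move=> Jjj; have bd : (block_of d n i < d)%N.
  have /andP [d_gt0 _] : (0 < d)%N && (0 < n - d)%N by rewrite -muln_gt0 (leq_trans _ (ltn_ord i)).
  by rewrite /block_of; move: (i %/ _)%N => q; lia.
rewrite mnm_sumE (eq_bigr (fun k => if k == block_of d n i then
  (i %% (n - d) < J k - k)%N : nat else 0%N)); last first.
  by move=> k _; rewrite mnmE eq_sym; case: eqP.
rewrite -big_mkcond big_nat1_eq /= bd /expected; case: insubP => [k _ kE|]; last by rewrite bd.
by rewrite /block_of -kE Jjj; case: ifP.
Qed.

Theorem proposition4p4 (K : closedFieldType) (hK : [pchar K]%R =i pred0)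
  (d n : nat) (hd : (1 <= d)%N) (hdn : (d < n)%N)
  (jj : 'I_d -> 'I_n) (hjj : forall a b : 'I_d, (a < b)%N -> (jj a < jj b)%N) :
  nu_ratio
    (plucker (ltnW hdn) jj (mmat K d n))
    (plucker (ltnW hdn) (widen_ord (ltnW hdn)) (mmat K d n))
    (expected jj).
Proof.
pose J k := if insub k is Some k' then val (jj k') else 0%N.
have Jjj (k : 'I_d) : J k = jj k by rewrite /J valK.
have nu_den := is_nu_plucker K hdn (jj := widen_ord (ltnW hdn)) (J := id)
  (fun _ => erefl) (fun _ _ => id).
rewrite big1_seq in nu_den; last by move=> k _; rewrite subnn block_mono0.
exists (\sum_(0 <= k < d) block_mono d n k (J k - k))%MM, 0%MM; split => //.
- exact: is_nu_plucker.
- by move=> i; rewrite mnm0E subr0; apply: expected_block_mono.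
Qed.
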